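(* Let $(\Omega_X,\mathcal{F}_X)$ and $(\Omega_y,\mathcal{F}_y)$ be measurable spaces and $\pi$ a probability measure on $(\Omega_X\times\Omega_y,\mathcal{F}_X\otimes\mathcal{F}_y)$. Let $s:\Omega_X\times\Omega_y\to\mathbb{R}$ be a measurable score function, $N\ge 1$, $\alpha\in[0,1]$, and let $(X_1,y_1),\dots,(X_N,y_N),(X,y)$ be i.i.d. with law $\pi$. Let $\hat q$ be the $\lceil(1-\alpha)(N+1)\rceil$-th smallest value among $s(X_1,y_1),\dots,s(X_N,y_N)$ (with $\hat q=+\infty$ if $\lceil(1-\alpha)(N+1)\rceil>N$), and define the conformal set $S^{(\alpha)}(x)=\{y'\in\Omega_y: s(x,y')\le \hat q\}$. If $X$ and $s(X,y)$ are independent random variables, then $\alpha$-input-space strong conditional coverage holds: for every $\omega_X\in\mathcal{F}_X$ with $\mathbb{P}(X\in\omega_X)>0$, $$\mathbb{P}\big(y\in S^{(\alpha)}(X)\,\big|\,X\in\omega_X\big)\ge 1-\alpha,$$ where the probability is taken jointly over the calibration data $(X_i,y_i)_{i\le N}$ and the test point $(X,y)$.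
   Context: Split-conformal setting: the predictive model (if any) entering $s$ is fixed and independent of the calibration and test data. The calibration points $(X_i,y_i)_{i=1}^N$ and the test point $(X,y)$ are i.i.d. from $\pi$. Probabilities are marginalized over the calibration data. *)

From HB Require Import structures.
From mathcomp Require Import all_boot all_order all_algebra.
From mathcomp Require Import all_classical all_reals all_analysis.
Set Implicit Arguments. Unset Strict Implicit. Unset Printing Implicit Defensive.
Import Order.TTheory GRing.Theory Num.Theory.
Local Open Scope classical_set_scope.
Local Open Scope ring_scope.

(* Mutual independence of a finite family of random elements Z : 'I_n -> Omega -> T,
   each measurable: the joint probability of any rectangle is the product of the
   marginal probabilities (taking A i = setT recovers every subfamily). *)
Definition mutually_independent {dO d : measure_display} (R : realType)
  (Omega : measurableType dO) (T : measurableType d) (P : probability Omega R)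
  (n : nat) (Z : 'I_n -> Omega -> T) : Prop :=
  (forall i, measurable_fun setT (Z i)) /\
  forall A : 'I_n -> set T, (forall i, measurable (A i)) ->
    P (\bigcap_(i in setT) (Z i @^-1` A i)) = (\prod_(i < n) P (Z i @^-1` A i))%E.

Definition iid_with_law {dO d : measure_display} (R : realType)
  (Omega : measurableType dO) (T : measurableType d) (P : probability Omega R)
  (pi : probability T R) (n : nat) (Z : 'I_n -> Omega -> T) : Prop :=
  mutually_independent P Z /\
  forall i A, measurable A -> P (Z i @^-1` A) = pi A.

(* The N calibration points followed by the test point, as a family on 'I_N.+1 *)
Definition calib_and_test {Omega T : Type} (N : nat)
  (Zc : 'I_N -> Omega -> T) (Zt : Omega -> T) : 'I_N.+1 -> Omega -> T :=
  fun i => match unlift ord_max i with Some j => Zc j | None => Zt end.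

Definition independent_rv {dO d1 d2 : measure_display} (R : realType)
  (Omega : measurableType dO) (T1 : measurableType d1) (T2 : measurableType d2)
  (P : probability Omega R) (U : Omega -> T1) (V : Omega -> T2) : Prop :=
  forall A B, measurable A -> measurable B ->
    P (U @^-1` A `&` V @^-1` B) = (P (U @^-1` A) * P (V @^-1` B))%E.

(* k-th smallest element of a list (1-indexed); +oo if k exceeds the length;
   -oo if k <= 0 (only happens for alpha = 1, where the result is vacuous). *)
Definition kth_smallest (R : realType) (k : int) (l : seq R) : \bar R :=
  if (k <= 0)%R then -oo%E
  else if ((size l)%:Z < k)%R then +oo%E
  else (nth 0 (sort <=%R l) (`|k|%N.-1))%:E.

Definition conformal_qhat (R : realType) (alpha : R) (scores : seq R) : \bar R :=
  kth_smallest (Num.ceil ((1 - alpha) * (size scores).+1%:R)) scores.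

Definition conformal_set {TX Ty : Type} (R : realType) (s : TX * Ty -> R)
  (qhat : \bar R) (x : TX) : set Ty := [set y' | ((s (x, y'))%:E <= qhat)%E].

Definition condprob {dO : measure_display} (R : realType) (Omega : measurableType dO)
  (P : probability Omega R) (A B : set Omega) : R :=
  fine (P (A `&` B)) / fine (P B).

(* The N + 1 scores s(X_1, y_1), ..., s(X_N, y_N), s(X, y) are i.i.d., hence
   exchangeable. Let B_j be the event that fewer than k scores lie strictly below
   the j-th one: by exchangeability all B_j have the same probability, and at every
   outcome at least k of them occur, so each has probability at least k / (N + 1).
   The test point is covered exactly when B_(N+1) holds for
   k = ceil((1 - alpha) (N + 1)), which gives coverage 1 - alpha. Conditioning on
   X in omega_X does not change this probability: that event is independent of
   s(X, y) and of the calibration points, hence, by a pi-lambda argument on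
   rectangles, of the whole vector of scores. *)

From HB Require Import structures.
From mathcomp Require Import all_boot all_order all_algebra perm.
From mathcomp Require Import all_classical all_reals all_analysis.
From mathcomp Require Import measurable_realfun lra.
Import Order.TTheory GRing.Theory Num.Theory.
Local Open Scope classical_set_scope.
Local Open Scope ring_scope.

Lemma measurableT_preimage {d d'} {T : measurableType d} {U : measurableType d'}
    (f : T -> U) (B : set U) :
  measurable_fun setT f -> measurable B -> measurable (f @^-1` B).
Proof. by move=> mf mB; rewrite -[X in measurable X]setTI; exact: mf. Qed.

Section rv_tuple.
Context {d : measure_display} {T : measurableType d} {n : nat}.

Definition rectangle (A : 'I_n -> set T) : set (n.-tuple T) :=
  [set t | forall i, A i (tnth t i)].

Definition measurable_rectangles : set (set (n.-tuple T)) :=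
  [set X | exists2 A : 'I_n -> set T, (forall i, measurable (A i)) & X = rectangle A].

Lemma rectangleE A : rectangle A = \bigcap_(i in setT) ((@tnth n T)^~ i @^-1` A i).
Proof. by apply/seteqP; split => t /= At i => [_|]; apply: At. Qed.

Lemma measurable_rectangle A : (forall i, measurable (A i)) -> measurable (rectangle A).
Proof.
move=> mA; rewrite rectangleE; apply: fin_bigcap_measurable; first exact: finite_finset.
by move=> i _; apply: measurableT_preimage => //; exact: measurable_tnth.
Qed.

Lemma measurable_tupleE : measurable = <<s measurable_rectangles >>.
Proof.
apply/seteqP; split => [X mX|].
- apply: (smallest_sub (smallest_sigma_algebra _ _) _ mX).
  move=> Y; rewrite -bigcup_seq => -[i _ [B mB <-]].
  apply: sub_sigma_algebra; exists (fun j => if j == i then B else setT).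
    by move=> j; case: ifP.
  apply/seteqP; split => t /=; last by move/(_ i); rewrite eqxx.
  by move=> [_ Bt] j; case: eqP => // ->.
- apply: smallest_sub; first exact: sigma_algebra_measurable.
  by move=> X [A mA ->]; exact: measurable_rectangle.
Qed.

Lemma setI_closed_measurable_rectangles : setI_closed measurable_rectangles.
Proof.
move=> X Y [A mA ->] [B mB ->]; exists (fun i => A i `&` B i).
  by move=> i; exact: measurableI.
by apply/seteqP; split => t /= => [[At Bt] i | ABt]; [split | split => i; case: (ABt i)].
Qed.

Definition rv_tuple {Omega : Type} (Y : 'I_n -> Omega -> T) (o : Omega) : n.-tuple T :=
  [tuple Y i o | i < n].

Lemma tnth_rv_tuple {Omega : Type} (Y : 'I_n -> Omega -> T) o : tnth (rv_tuple Y o) = Y^~ o.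
Proof. by apply/funext => i; rewrite tnth_mktuple. Qed.

Lemma rv_tuple_preimage_rectangle {Omega : Type} (Y : 'I_n -> Omega -> T) A :
  rv_tuple Y @^-1` rectangle A = \bigcap_(i in setT) (Y i @^-1` A i).
Proof.
by rewrite rectangleE; apply/seteqP; split => o YA i _; have /= := YA i I; rewrite tnth_mktuple.
Qed.

Lemma measurable_rv_tuple {dO} {Omega : measurableType dO} {Y : 'I_n -> Omega -> T} :
  (forall i, measurable_fun setT (Y i)) -> measurable_fun setT (rv_tuple Y).
Proof.
move=> mY; apply/measurable_fun_tnthP => i.
by rewrite (_ : _ \o _ = Y i) //; apply/funext => o /=; rewrite tnth_mktuple.
Qed.

Lemma rv_tuple_measure_eq {R : realType} {d1 d2} {Omega1 : measurableType d1}
    {Omega2 : measurableType d2}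
    (m1 : {measure set Omega1 -> \bar R}) (m2 : {measure set Omega2 -> \bar R})
    (Y1 : 'I_n -> Omega1 -> T) (Y2 : 'I_n -> Omega2 -> T) :
  (forall i, measurable_fun setT (Y1 i)) -> (forall i, measurable_fun setT (Y2 i)) ->
  (m1 setT < +oo)%E ->
  (forall A, (forall i, measurable (A i)) ->
     m1 (\bigcap_(i in setT) (Y1 i @^-1` A i)) = m2 (\bigcap_(i in setT) (Y2 i @^-1` A i))) ->
  forall B, measurable B -> m1 (rv_tuple Y1 @^-1` B) = m2 (rv_tuple Y2 @^-1` B).
Proof.
move=> mY1 mY2 m1_fin m1m2 B mB.
(* [mT1] and [mT2] equip the two pushforwards with their measure structure. *)
have mT1 := measurable_rv_tuple mY1; have mT2 := measurable_rv_tuple mY2.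
have := measure_unique measurable_rectangles (fun _ => setT) measurable_tupleE
  setI_closed_measurable_rectangles _ _ (pushforward m1 (rv_tuple Y1))
  (pushforward m2 (rv_tuple Y2)) _ _ B mB; apply.
- by move=> _; exists (fun _ => setT) => //; apply/seteqP; split.
- by rewrite bigcup_const.
- move=> X [A mA ->].
  by have := m1m2 A mA; rewrite -!rv_tuple_preimage_rectangle.
- by move=> _.
Qed.

End rv_tuple.

Section independence.
Context {R : realType} {dO d : measure_display} {Omega : measurableType dO}
  (P : probability Omega R) {T : measurableType d} {n : nat}.
Implicit Types Z : 'I_n -> Omega -> T.

Lemma mutually_independent_comp {dU} {U : measurableType dU} (f : T -> U) {Z} :
  measurable_fun setT f -> mutually_independent P Z ->
  mutually_independent P (fun i => f \o Z i).
Proof.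
move=> mf [mZ indZ]; split => [i|A mA]; first exact: measurableT_comp.
by apply: (indZ (fun i => f @^-1` A i)) => i; exact: measurableT_preimage.
Qed.

Lemma mutually_independent_perm {Z} (sg : {perm 'I_n}) :
  mutually_independent P Z -> mutually_independent P (fun i => Z (sg i)).
Proof.
move=> [mZ indZ]; split => [i|A mA]; first exact: mZ.
have -> : \bigcap_(i in setT) (Z (sg i) @^-1` A i) =
          \bigcap_(i in setT) (Z i @^-1` A (sg^-1 i)%g).
  apply/seteqP; split => o ZA i _.
    by have := ZA (sg^-1 i)%g I; rewrite /= permKV.
  by have := ZA (sg i) I; rewrite /= permK.
rewrite indZ // [RHS](reindex_inj (@perm_inj _ sg^-1)%g).
by apply: eq_bigr => i _; rewrite permKV.
Qed.

Definition exchangeable (V : 'I_n -> Omega -> T) : Prop :=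
  forall (sg : {perm 'I_n}) B, measurable B ->
    P (rv_tuple (fun i => V (sg i)) @^-1` B) = P (rv_tuple V @^-1` B).

Lemma iid_exchangeable {Z} : mutually_independent P Z ->
  (forall i j A, measurable A -> P (Z i @^-1` A) = P (Z j @^-1` A)) ->
  exchangeable Z.
Proof.
move=> indZ Zij sg B mB; have [mZ prodZ] := indZ.
have [_ prodZsg] := mutually_independent_perm sg indZ.
apply: rv_tuple_measure_eq => // [|A mA]; first exact: fin_num_fun_lty (fin_num_measure P).
transitivity (\prod_(i < n) P (Z (sg i) @^-1` A i))%E; first exact: prodZsg.
transitivity (\prod_(i < n) P (Z i @^-1` A i))%E; last exact/esym/prodZ.
by apply: eq_bigr => i _; exact: Zij.
Qed.

Lemma independent_event_rv_tuple {dU} {U : measurableType dU} (f : T -> U) {Z}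
    (i0 : 'I_n) (E : set T) :
  measurable_fun setT f -> mutually_independent P Z -> measurable E ->
  (forall A, measurable A -> P (Z i0 @^-1` (E `&` f @^-1` A)) =
                              (P (Z i0 @^-1` E) * P (Z i0 @^-1` (f @^-1` A)))%E) ->
  forall B, measurable B ->
    P (rv_tuple (fun i => f \o Z i) @^-1` B `&` Z i0 @^-1` E) =
    (P (Z i0 @^-1` E) * P (rv_tuple (fun i => f \o Z i) @^-1` B))%E.
Proof.
move=> mf indZ mE indE B mB.
have [mZ prodZ] := indZ; have [mfZ prodfZ] := mutually_independent_comp f mf indZ.
have mfA A : measurable A -> measurable (f @^-1` A) by exact: measurableT_preimage.
set D := Z i0 @^-1` E.
have mD : measurable D by exact: measurableT_preimage.
have PDE : P D = (fine (P D))%:E by rewrite fineK ?fin_num_measure.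
have cge0 : 0 <= fine (P D) by rewrite fine_ge0.
rewrite PDE; apply: (rv_tuple_measure_eq (mrestr P mD) (mscale (NngNum cge0) P)) => // [|A mA].
  exact: (le_lt_trans (probability_le1 P (measurableI _ _ measurableT mD)) (ltry 1)).
set fZA := \bigcap_(i in setT) ((f \o Z i) @^-1` A i).
change (P (fZA `&` D) = (fine (P D))%:E * P fZA)%E.
(* Only the [i0]-th factor of the rectangle meets [D]; [indE] splits it. *)
pose A' i := if i == i0 then E `&` f @^-1` A i else f @^-1` A i.
have mA' i : measurable (A' i).
  by rewrite /A'; case: ifP => _; [apply: measurableI => //|]; exact: mfA.
have -> : fZA `&` D = \bigcap_(i in setT) (Z i @^-1` A' i).
  rewrite /fZA; apply/seteqP; split => o /= => [[fZAo Do] i _ | ZA'].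
    rewrite /A'; case: eqP => [->|_] /=; last exact: fZAo.
    by split; [exact: Do | exact: fZAo].
  split => [i _|]; last by have := ZA' i0 I; rewrite /A' eqxx => -[].
  by have := ZA' i I; rewrite /A'; case: eqP => [_ /= []|].
rewrite prodZ // /fZA prodfZ // (bigD1 i0) //= [in RHS](bigD1 i0) //=.
rewrite {1}/A' eqxx indE // -PDE muleA; congr (_ * _)%E.
by apply: eq_bigr => i /negbTE i_neq; rewrite /A' i_neq.
Qed.

Lemma condprob_independent {A B : set Omega} : measurable A -> measurable B ->
  (0 < P B)%E -> P (A `&` B) = (P B * P A)%E -> condprob P A B = fine (P A).
Proof.
move=> mA mB PB_gt0 indAB.
have PB_neq0 : fine (P B) != 0.
  by rewrite gt_eqF // fine_gt0 // PB_gt0 (le_lt_trans (probability_le1 P mB)) ?ltry.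
by rewrite /condprob indAB fineM ?fin_num_measure // mulrAC divff ?mul1r.
Qed.

End independence.

Section rank.
Context {disp : Order.disp_t} {T : orderType disp}.
Local Open Scope order_scope.
Local Open Scope set_scope.

Definition rank_of {n} (v : 'I_n -> T) (j : 'I_n) : nat := #|[set i | v i < v j]|.

Lemma rank_of_perm {n} (v : 'I_n -> T) (sg : {perm 'I_n}) j :
  rank_of (v \o sg) j = rank_of v (sg j).
Proof.
rewrite /rank_of -[RHS](card_preimset _ (@perm_inj _ sg)).
by apply: eq_card => i; rewrite !inE.
Qed.

Lemma rank_of_lt {n} (v : 'I_n -> T) j : (rank_of v j < n)%N.
Proof.
rewrite -[n in (_ < n)%N]card_ord /rank_of; apply: proper_card; apply/properP.
by split; [exact: subset_predT | exists j => //; rewrite inE ltxx].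
Qed.

Lemma rank_of_ord_max {N} (v : 'I_N.+1 -> T) :
  rank_of v ord_max = count (fun i => v (lift ord_max i) < v ord_max) (enum 'I_N).
Proof.
rewrite -sum1_count big_enum_cond sum1_card /rank_of.
rewrite -(card_imset _ (@lift_inj _ ord_max)); apply: eq_card => i.
rewrite inE; case: (unliftP ord_max i) => [j ->|->].
  by rewrite (mem_imset _ _ (@lift_inj _ ord_max)).
rewrite ltxx; apply/esym/negbTE/negP => /imsetP [j _ /eqP].
by rewrite (negbTE (neq_lift _ _)).
Qed.

Lemma leq_card_rank_lt {n} (v : 'I_n -> T) k :
  (k <= n)%N -> (k <= #|[set j | (rank_of v j < k)%N]|)%N.
Proof.
move=> k_le_n; set J := [set j | _].
have [J_full|[j0 j0_notJ]] := set_0Vmem (~: J).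
  by rewrite -(finset.setCK J) J_full finset.setC0 cardsT card_ord.
have [j1 j1_notJ j1_min] := arg_minP v j0_notJ.
have below_j1 : [set i | v i < v j1] \subset J.
  apply/fintype.subsetP => i; rewrite inE => v_lt; apply/negPn/negP => i_notJ.
  have i_in : i \in ~: J by rewrite inE.
  by have := j1_min i i_in; rewrite leNgt v_lt.
apply: leq_trans (subset_leq_card below_j1).
have : j1 \in ~: J := j1_notJ.
by rewrite !inE -leqNgt.
Qed.

Lemma le_nth_sort_count (x0 x : T) (s : seq T) k : (0 < k <= size s)%N ->
  (x <= nth x0 (sort <=%O s) k.-1) = (count (< x) s < k)%N.
Proof.
case: k => // k /= k_lt; set ss := sort _ s.
have ss_sorted : sorted <=%O ss by apply: sort_sorted; exact: le_total.
have size_ss : size ss = size s by rewrite size_sort.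
have -> : count (< x) s = count (< x) ss by apply/seq.permP; rewrite perm_sym perm_sort.
have nth_mono := sorted_leq_nth le_trans lexx x0 ss_sorted.
have k_lt_ss : (k < size ss)%N by rewrite size_ss.
apply/idP/idP => [x_le|].
- rewrite -(cat_take_drop k ss) count_cat.
  have -> : count (< x) (drop k ss) = 0%N.
    apply/eqP; rewrite -leqn0 leqNgt -has_count; apply/hasPn => y /(nthP x0) [i i_lt <-].
    rewrite size_drop in i_lt; rewrite nth_drop /= -leNgt (le_trans x_le) //.
    by apply: nth_mono; rewrite ?inE ?leq_addr // -ltn_subRL.
  by rewrite addn0 ltnS (leq_trans (count_size _ _)) // size_take k_lt_ss.
- apply: contraTT; rewrite -ltNge -leqNgt => nth_lt.
  rewrite -(cat_take_drop k.+1 ss) count_cat (leq_trans _ (leq_addr _ _)) //.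
  have : all (< x) (take k.+1 ss).
    apply/allP => y /(nthP x0) [i]; rewrite size_takel // => i_lt <-.
    rewrite nth_take //=; apply: le_lt_trans nth_lt.
    by apply: nth_mono; rewrite ?inE // (leq_trans i_lt).
  by rewrite all_count => /eqP ->; rewrite size_takel.
Qed.

End rank.

Lemma measurable_finset_pred {dX} {X : measurableType dX} {n} (E : 'I_n -> set X)
    (p : pred {set 'I_n}) :
  (forall i, measurable (E i)) -> measurable [set x | p [set i | x \in E i]%SET].
Proof.
move=> mE.
have -> : [set x | p [set i | x \in E i]%SET] =
    \bigcup_(S in [set S | p S]) \bigcap_(i in setT) (if i \in S then E i else ~` E i).
  apply/seteqP; split => x /= => [pEx | [S pS ESx]].
    exists [set i | x \in E i]%SET => // i _; rewrite inE.
    case: ifPn => [/set_mem // | /negP x_notin Ex].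
    by apply: x_notin; exact: mem_set.
  suff -> : [set i | x \in E i]%SET = S by [].
  apply/setP => i; rewrite inE; have := ESx i I.
  case: (i \in S) => [/mem_set -> // | notE].
  by apply/negbTE/negP => /set_mem.
apply: fin_bigcup_measurable; first exact: finite_finset.
move=> S _; apply: fin_bigcap_measurable; first exact: finite_finset.
by move=> i _; case: ifP => _; [ | apply: measurableC]; exact: mE.
Qed.

Lemma le_sum_measure_card {R : realType} {dX} {X : measurableType dX}
    (mu : {measure set X -> \bar R}) {n} (B : 'I_n -> set X) k :
  (forall i, measurable (B i)) -> (forall x, k <= #|[set i | x \in B i]%SET|)%N ->
  ((k%:R)%:E * mu [set: X] <= \sum_(i < n) mu (B i))%E.
Proof.
move=> mB k_le.
have mindic i : measurable_fun [set: X] (fun x : X => (\1_(B i) x : R)%:E).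
  by apply/measurable_EFinP; exact: measurable_indic.
have -> : (\sum_(i < n) mu (B i) = \int[mu]_x (\sum_(i < n) (\1_(B i) x)%:E))%E.
  rewrite ge0_integral_sum //; apply: eq_bigr => i _.
  by rewrite integral_indic // setIT.
rewrite -integral_cst //; apply: ge0_le_integral => //.
- by move=> x _; rewrite lee_fin.
- by apply: emeasurable_sum => i; exact: mindic.
- move=> x _; rewrite sumEFin lee_fin; under eq_bigr do rewrite indicE.
  rewrite -natr_sum ler_nat (leq_trans (k_le x)) // -sum1_card big_mkcond /=.
  by apply: leq_sum => i _; rewrite inE; case: (x \in B i).
Qed.

Section exchangeable_rank.
Context {R : realType} {dO : measure_display} {Omega : measurableType dO}
  (P : probability Omega R).

Definition rank_lt_set {n} (j : 'I_n) (k : nat) : set (n.-tuple R) :=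
  [set t | (rank_of (tnth t) j < k)%N].

Lemma measurable_rank_lt {n} (j : 'I_n) k : measurable (rank_lt_set j k).
Proof.
pose E i := [set t : n.-tuple R | tnth t i < tnth t j].
have mE i : measurable (E i).
  apply: (measurableT_preimage (fun t : n.-tuple R => tnth t i < tnth t j) [set true]) => //.
  by apply: measurable_fun_ltr; exact: measurable_tnth.
have E_memE t : [set i | t \in E i]%SET = [set i | tnth t i < tnth t j]%SET.
  by apply/setP => i; rewrite !inE; apply/idP/idP => [/set_mem | /mem_set].
have := measurable_finset_pred E (fun S => (#|S| < k)%N) mE.
by congr measurable; apply/funext => t /=; rewrite E_memE.
Qed.

Lemma exchangeable_rank_lt {n} (V : 'I_n -> Omega -> R) (j : 'I_n) k :
  exchangeable P V -> (forall i, measurable_fun setT (V i)) -> (k <= n)%N ->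
  ((k%:R)%:E <= (n%:R)%:E * P (rv_tuple V @^-1` rank_lt_set j k))%E.
Proof.
move=> exV mV k_le_n.
pose B i := rv_tuple V @^-1` rank_lt_set i k.
have mB i : measurable (B i).
  exact: measurableT_preimage (measurable_rv_tuple mV) (measurable_rank_lt i k).
have PB_const i : P (B i) = P (B j).
  rewrite /B -(exV (tperm i j) _ (measurable_rank_lt j k)); congr (P _).
  apply/funext => o; rewrite /rank_lt_set /= !tnth_rv_tuple.
  by rewrite (rank_of_perm (V^~ o) (tperm i j) j) tpermR.
have k_le_card o : (k <= #|[set i | o \in B i]%SET|)%N.
  apply: leq_trans (leq_card_rank_lt (V^~ o) k k_le_n) _; apply: subset_leq_card.
  apply/fintype.subsetP => i; rewrite !inE => rank_lt.
  by rewrite /B /rank_lt_set /= tnth_rv_tuple.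
have k_mulP1 : ((k%:R)%:E * P [set: Omega] = (k%:R)%:E)%E.
  by rewrite probability_setT mule1.
have := le_sum_measure_card P B k mB k_le_card.
by rewrite k_mulP1 (eq_bigr _ (fun i _ => PB_const i)) sumr_const card_ord mule_natl.
Qed.

End exchangeable_rank.

Section conformal.
Context {R : realType}.

Lemma le_kth_smallest_rank {N} (v : 'I_N.+1 -> R) (k : nat) :
  ((v ord_max)%:E <= kth_smallest k%:Z [seq v (lift ord_max i) | i <- enum 'I_N])%E =
  (rank_of v ord_max < minn k N.+1)%N.
Proof.
rewrite /kth_smallest size_map size_enum_ord.
case: k => [|k] /=; first by rewrite leeNy_eq min0n ltn0.
rewrite ltz_nat; case: (ltnP N k.+1) => [N_lt | k_lt_N].
  by rewrite leey (minn_idPr N_lt) rank_of_lt.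
rewrite lee_fin (le_nth_sort_count _ _ _ k.+1); last by rewrite size_map size_enum_ord.
by rewrite rank_of_ord_max (minn_idPl (leqW k_lt_N)); congr (_ < _)%N; exact: count_map.
Qed.

(* Capping at [N.+1] accounts for [kth_smallest] returning +oo beyond [N]. *)
Definition conformal_index N (alpha : R) : nat :=
  minn `|Num.ceil ((1 - alpha) * N.+1%:R)|%N N.+1.

Lemma conformal_ceil_ge0 N (alpha : R) : alpha <= 1 ->
  (0 <= Num.ceil ((1 - alpha) * N.+1%:R))%R.
Proof.
by move=> alpha_le1; rewrite ceil_ge0 (lt_le_trans _ (mulr_ge0 _ _)) ?subr_ge0 ?ltrN10.
Qed.

Lemma conformal_index_ge N (alpha : R) : 0 <= alpha <= 1 ->
  (1 - alpha) * N.+1%:R <= (conformal_index N alpha)%:R.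
Proof.
case/andP => alpha_ge0 alpha_le1.
rewrite /conformal_index; case: (leqP `|Num.ceil _|%N N.+1) => [ceil_le | ceil_gt].
  by rewrite natr_absz ger0_norm ?conformal_ceil_ge0 // ceil_ge.
by rewrite ler_piMl // lerBlDr lerDl.
Qed.

Definition conformal_covered N (alpha : R) : set (N.+1.-tuple R) :=
  [set t | ((tnth t ord_max)%:E <=
            conformal_qhat alpha [seq tnth t (lift ord_max i) | i <- enum 'I_N])%E].

Lemma conformal_coveredE N (alpha : R) : alpha <= 1 ->
  conformal_covered N alpha = rank_lt_set ord_max (conformal_index N alpha).
Proof.
move=> alpha_le1; apply/funext => t.
rewrite /conformal_covered /rank_lt_set /conformal_qhat /= size_map size_enum_ord.
have ceil_ge0 := conformal_ceil_ge0 N alpha alpha_le1.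
by rewrite -[X in kth_smallest X](gez0_abs ceil_ge0) le_kth_smallest_rank.
Qed.

Lemma measurable_conformal_covered N (alpha : R) : alpha <= 1 ->
  measurable (conformal_covered N alpha).
Proof. by move=> alpha_le1; rewrite conformal_coveredE //; exact: measurable_rank_lt. Qed.

Lemma exchangeable_conformal_coverage {dO} {Omega : measurableType dO}
    (P : probability Omega R) N (alpha : R) (V : 'I_N.+1 -> Omega -> R) :
  exchangeable P V -> (forall i, measurable_fun setT (V i)) -> 0 <= alpha <= 1 ->
  1 - alpha <= fine (P (rv_tuple V @^-1` conformal_covered N alpha)).
Proof.
move=> exV mV /[dup] alpha_01 /andP[_ alpha_le1].
rewrite conformal_coveredE //; set E := rv_tuple V @^-1` _.
have mE : measurable E.
  exact: measurableT_preimage (measurable_rv_tuple mV) (measurable_rank_lt _ _).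
have := exchangeable_rank_lt P V ord_max (conformal_index N alpha) exV mV (geq_minr _ _).
rewrite -/E -(fineK (fin_num_measure P _ mE)) -EFinM lee_fin.
have := conformal_index_ge N alpha alpha_01; have := fine_ge0 (measure_ge0 P E).
have : 0 < N.+1%:R :> R by rewrite ltr0Sn.
nra.
Qed.

End conformal.

Lemma calib_and_test_max {Omega T : Type} {N} (Zc : 'I_N -> Omega -> T) Zt :
  calib_and_test Zc Zt ord_max = Zt.
Proof. by rewrite /calib_and_test unlift_none. Qed.

Lemma calib_and_test_lift {Omega T : Type} {N} (Zc : 'I_N -> Omega -> T) Zt j :
  calib_and_test Zc Zt (lift ord_max j) = Zc j.
Proof. by rewrite /calib_and_test liftK. Qed.

Theorem proposition1 (R : realType) (dX dy dO : measure_display)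
  (TX : measurableType dX) (Ty : measurableType dy)
  (pi : probability (TX * Ty)%type R)
  (s : TX * Ty -> R) (hs : measurable_fun setT s)
  (N : nat) (hN : (0 < N)%N) (alpha : R) (ha0 : 0 <= alpha) (ha1 : alpha <= 1)
  (Omega : measurableType dO) (P : probability Omega R)
  (Zc : 'I_N -> Omega -> (TX * Ty)%type) (Zt : Omega -> (TX * Ty)%type)
  (hiid : iid_with_law P pi (calib_and_test Zc Zt))
  (hind : independent_rv P (fun o => (Zt o).1) (fun o => s (Zt o))) :
  let qhat := fun o => conformal_qhat alpha [seq s (Zc i o) | i <- enum 'I_N] in
  forall omegaX : set TX, measurable omegaX ->
    (0 < P ((fun o => (Zt o).1) @^-1` omegaX))%E ->
    1 - alpha <=
      condprob P [set o | conformal_set s (qhat o) (Zt o).1 (Zt o).2]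
                 ((fun o => (Zt o).1) @^-1` omegaX).
Proof.
move=> qhat omegaX momegaX PX_gt0.
case: hiid; set Z := calib_and_test Zc Zt => indZ lawZ; have [mZ _] := indZ.
have ZtE : Z ord_max = Zt := calib_and_test_max Zc Zt.
pose S i := s \o Z i.
have mS i : measurable_fun setT (S i) := measurableT_comp hs (mZ i).
have coveredE : [set o | conformal_set s (qhat o) (Zt o).1 (Zt o).2] =
                rv_tuple S @^-1` conformal_covered N alpha.
  apply/funext => o; rewrite /conformal_set /conformal_covered /= tnth_rv_tuple.
  rewrite -surjective_pairing /S /= ZtE /qhat; congr (_ <= conformal_qhat _ _)%E.
  by apply: eq_map => i; rewrite /Z calib_and_test_lift.
have mC := measurable_conformal_covered N alpha ha1.
have mX : measurable ((fun o => (Zt o).1) @^-1` omegaX).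
  by apply: measurableT_preimage => //; rewrite -ZtE; exact: measurableT_comp.
have mcovered := measurableT_preimage _ _ (measurable_rv_tuple mS) mC.
rewrite coveredE (condprob_independent P mcovered mX PX_gt0).
  apply: exchangeable_conformal_coverage => //; last by apply/andP.
  apply: iid_exchangeable => [|i j A mA]; first exact: mutually_independent_comp.
  have msA : measurable (s @^-1` A) by exact: measurableT_preimage.
  exact: (etrans (lawZ i _ msA) (esym (lawZ j _ msA))).
rewrite -ZtE; apply: (independent_event_rv_tuple P s ord_max (fst @^-1` omegaX)) => //.
  exact: measurableT_preimage.
by move=> A mA; rewrite ZtE; exact: hind.
Qed.
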